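(* For every admissible $v>9$ (i.e. $v\equiv 1$ or $3 \pmod 6$, $v>9$) and every Steiner triple system $\mathcal{S}=\mathrm{STS}(v)$, the graph $G_0=0$-$\mathrm{BIG}(\mathcal{S})$ is not silver. (For $v=7$ and $v=9$, $0$-$\mathrm{BIG}(\mathrm{STS}(v))$ is totally silver.)
   Context: A Steiner triple system $\mathrm{STS}(v)$ is a set $V$ of $v$ elements with a collection of $3$-subsets (blocks) such that every pair of elements lies in exactly one block; it exists iff $v\equiv 1,3\pmod 6$. The $0$-block intersection graph $0$-$\mathrm{BIG}$ has the blocks as vertices, two blocks adjacent iff they are disjoint; it is a regular graph. An $\alpha$-set of a graph is a maximum independent set. Let $G$ be an $r$-regular graph and $c$ a proper $(r+1)$-coloring of $G$. A vertex $x$ is rainbow with respect to $c$ if every one of the $r+1$ colors appears on $N[x]=N(x)\cup\{x\}$. Given an $\alpha$-set $I$, $c$ is silver with respect to $I$ if every $x\in I$ is rainbow; $G$ is silver if it admits a silver coloring with respect to some $\alpha$-set; $G$ is totally silver if it admits a proper $(r+1)$-coloring in which every vertex is rainbow. *)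

From mathcomp Require Import all_boot.
Set Implicit Arguments. Unset Strict Implicit. Unset Printing Implicit Defensive.

Section Graphs.
Variable T : finType.
Variable e : rel T.

Definition nbhd (x : T) : {set T} := [set y | e x y].

Definition regular (r : nat) : Prop := forall x : T, #|nbhd x| = r.

Definition independent (I : {set T}) : Prop :=
  forall x y, x \in I -> y \in I -> ~~ e x y.

Definition alpha_set (I : {set T}) : Prop :=
  independent I /\ forall J : {set T}, independent J -> #|J| <= #|I|.

Definition proper_coloring (k : nat) (c : T -> 'I_k) : Prop :=
  forall x y, e x y -> c x != c y.

Definition rainbow (k : nat) (c : T -> 'I_k) (x : T) : Prop :=
  forall i : 'I_k, exists y, ((y == x) || e x y) && (c y == i).

Definition silver_coloring (r : nat) (I : {set T}) (c : T -> 'I_r.+1) : Prop :=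
  proper_coloring c /\ forall x, x \in I -> rainbow c x.

Definition silver : Prop :=
  exists r, regular r /\
    exists (I : {set T}) (c : T -> 'I_r.+1), alpha_set I /\ silver_coloring I c.

Definition totally_silver : Prop :=
  exists r, regular r /\
    exists c : T -> 'I_r.+1, proper_coloring c /\ forall x, rainbow c x.
End Graphs.

Definition is_STS (v : nat) (B : {set {set 'I_v}}) : Prop :=
  (forall b, b \in B -> #|b| = 3) /\
  (forall x y : 'I_v, x != y -> #|[set b in B | (x \in b) && (y \in b)]| = 1).

Definition zero_BIG (v : nat) (B : {set {set 'I_v}}) : rel {b : {set 'I_v} | b \in B} :=
  fun b1 b2 => [disjoint val b1 & val b2].
Arguments zero_BIG {v} B.
Arguments is_STS {v} B.
Arguments silver {T} e.
Arguments totally_silver {T} e.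

From mathcomp Require Import all_boot zify.
Set Implicit Arguments. Unset Strict Implicit. Unset Printing Implicit Defensive.

(* An alpha-set I of the 0-BIG is a maximum intersecting family of blocks.
   In a silver colouring the r+1 vertices of N[x], x in I, get pairwise
   distinct colours.  Hence, if any two intersecting blocks outside I are both
   disjoint from some block of I, two blocks outside I never share a colour,
   so every block outside I meeting a block x0 of I has the colour of x0, and
   two such blocks cannot exist.  Both properties hold once
   v >= 13: a maximum intersecting family is either a star, or every point is
   on at most three of its blocks, some point on exactly three of them, and
   then all its blocks lie in the 7 points these three span.  For v = 13 this
   is impossible by counting the blocks meeting those 7 points once; for
   v >= 15 the family is a Fano subplane and each block outside it meets at
   most three of its blocks. *)

Section SilverObstruction.
Variables (T : finType) (e : rel T).

Definition outside_nonedges_dominated (I : {set T}) : Prop :=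
  forall y y', y \notin I -> y' \notin I -> y != y' -> ~~ e y y' ->
  exists2 x, x \in I & e x y && e x y'.

Definition nonneighbour_pair_outside (I : {set T}) : Prop :=
  exists x y1 y2, [/\ x \in I, y1 \notin I, y2 \notin I, y1 != y2 &
                      ~~ e x y1 && ~~ e x y2].

Variables (r : nat) (I : {set T}) (c : T -> 'I_r.+1).
Hypotheses (e_reg : regular e r) (I_indep : independent e I).
Hypothesis c_silver : silver_coloring e I c.

Lemma silver_injective_closed_nbhd x :
  x \in I -> {in x |: nbhd e x &, injective c}.
Proof.
move=> xI; apply/imset_injP; rewrite eqn_leq leq_imset_card /=.
have -> : #|x |: nbhd e x| = r.+1 by rewrite cardsU1 e_reg inE (I_indep xI xI).
rewrite -[X in X <= _](card_ord r.+1) -cardsT subset_leq_card //.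
apply/subsetP => i _; have [y /andP [Ny /eqP <-]] := c_silver.2 x xI i.
by apply: imset_f; rewrite !inE.
Qed.

Lemma silver_nbhd_colors_neq x y y' :
  x \in I -> e x y -> e x y' -> y != y' -> c y != c y'.
Proof.
move=> xI xy xy' yy'; apply: contraNneq yy' => cyy'.
by apply/eqP/(silver_injective_closed_nbhd xI); rewrite // !inE ?xy ?xy' orbT.
Qed.

Hypothesis I_dominated : outside_nonedges_dominated I.

Lemma silver_color_injective_outside y y' :
  y \notin I -> y' \notin I -> c y = c y' -> y = y'.
Proof.
move=> yI y'I cyy'; apply/eqP/negPn/negP => yy'.
have [x xI /andP [xy xy']] : exists2 x, x \in I & e x y && e x y'.
  apply: I_dominated => //; apply: contraTN (eqxx (c y)) => eyy'.
  by rewrite {2}cyy' (c_silver.1 _ _ eyy').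
by have := silver_nbhd_colors_neq xI xy xy' yy'; rewrite cyy' eqxx.
Qed.

Lemma silver_color_nonneighbour_outside x y :
  x \in I -> y \notin I -> ~~ e x y -> c y = c x.
Proof.
move=> xI yI xy; have [z /andP [Nz /eqP czy]] := c_silver.2 x xI (c y).
case/orP: Nz => [/eqP <- // | xz].
have zI : z \notin I by apply: contraTN xz => zI; exact: I_indep.
by move: xy; rewrite -(silver_color_injective_outside zI yI czy) xz.
Qed.

Lemma silver_coloring_obstruction : nonneighbour_pair_outside I -> False.
Proof.
move=> [x [y1 [y2 [xI y1I y2I y12 /andP [xy1 xy2]]]]].
have c12 : c y1 = c y2 by rewrite !(silver_color_nonneighbour_outside xI).
by move: y12; rewrite (silver_color_injective_outside y1I y2I c12) eqxx.
Qed.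

End SilverObstruction.

Lemma sum_nat_of_bool (T : finType) (A : {pred T}) (P : pred T) :
  \sum_(x in A) (P x : nat) = #|[set x in A | P x]|.
Proof.
rewrite -sum1_card big_mkcond [RHS]big_mkcond /=.
by apply: eq_bigr => x _; rewrite !inE; case: (x \in A); case: (P x).
Qed.

Lemma cards3 (T : finType) (x y z : T) :
  x != y -> x != z -> y != z -> #|[set x; y; z]| = 3.
Proof. by move=> xy xz yz; rewrite -setUA !cardsU1 cards1 !inE negb_or xy xz yz. Qed.

Lemma double_pred_ge7 n v : n.*2 = v.-1 -> 13 < v -> 7 <= n.
Proof. lia. Qed.

Section SteinerTripleSystem.
Variables (v : nat) (B : {set {set 'I_v}}).
Hypothesis B_STS : is_STS B.
Local Notation block := {b : {set 'I_v} | b \in B}.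
Local Notation meets X Y := (~~ zero_BIG B X Y).

Definition star (u : 'I_v) : {set block} := [set X : block | u \in val X].

Lemma card_block (X : block) : #|val X| = 3.
Proof. exact: B_STS.1 _ (valP X). Qed.

Lemma card_starI a w : a != w -> #|star a :&: star w| = 1.
Proof.
move=> aw; rewrite -(card_imset _ val_inj) -(B_STS.2 a w aw).
apply: eq_card => b; rewrite inE; apply/imsetP/andP => [[X] | [bB abw]].
  by rewrite !inE => /andP [aX wX] ->; rewrite (valP X) aX.
by exists (exist _ b bB); rewrite // !inE.
Qed.

Lemma block_eq (X Y : block) a w : a != w ->
  a \in val X -> w \in val X -> a \in val Y -> w \in val Y -> X = Y.
Proof.
move=> aw aX wX aY wY.
apply: (card_le1_eqP (A := star a :&: star w)); rewrite ?card_starI //.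
all: by rewrite !inE ?aX ?wX ?aY ?wY.
Qed.

Lemma block_through a w : a != w -> exists X : block, (a \in val X) && (w \in val X).
Proof.
move=> aw; have /card_gt0P [X] : 0 < #|star a :&: star w| by rewrite card_starI.
by rewrite !inE; exists X.
Qed.

Lemma meetsP (X Y : block) :
  reflect (exists2 w, w \in val X & w \in val Y) (meets X Y).
Proof.
rewrite /zero_BIG -setI_eq0; apply: (iffP (set0Pn _)) => [[w] | [w wX wY]].
  by rewrite inE => /andP [wX wY]; exists w.
by exists w; rewrite inE wX.
Qed.

Lemma sum_card_starI (F : {set block}) (S : {set 'I_v}) :
  \sum_(u in S) #|F :&: star u| = \sum_(X in F) #|val X :&: S|.
Proof.
transitivity (\sum_(u in S) \sum_(X in F) (u \in val X : nat)).
  by apply: eq_bigr => u _; rewrite sum_nat_of_bool; apply: eq_card => X; rewrite !inE.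
rewrite exchange_big; apply: eq_bigr => X _; rewrite sum_nat_of_bool.
by apply: eq_card => u; rewrite !inE andbC.
Qed.

Lemma double_card_star u : (#|star u|).*2 = v.-1.
Proof.
have := sum_card_starI (star u) [set~ u].
rewrite (eq_bigr (fun _ => 1)) => [|w]; last first.
  by rewrite !inE eq_sym => /card_starI.
rewrite sum1_card cardsC1 card_ord => ->; rewrite -muln2 -sum_nat_const.
apply: eq_bigr => X; rewrite inE => uX.
by move: (cardsD1 u (val X)); rewrite uX card_block setDE add1n => -[].
Qed.

Lemma setI_blocks_through (X Y : block) a :
  X != Y -> a \in val X -> a \in val Y -> val X :&: val Y = [set a].
Proof.
move=> XY aX aY; apply/setP => w; rewrite !inE.
apply/andP/eqP => [[wX wY] | ->]; last by [].
apply/eqP; apply: contraNT XY => wa; exact/eqP/(block_eq wa).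
Qed.

Lemma star_independent u : independent (zero_BIG B) (star u).
Proof. by move=> X Y; rewrite !inE => uX uY; apply/meetsP; exists u. Qed.

Lemma card_le_mul_star (F : {set block}) (S : {set 'I_v}) k :
  (forall X, X \in F -> 0 < #|val X :&: S|) ->
  (forall w, w \in S -> #|F :&: star w| <= k) -> #|F| <= #|S| * k.
Proof.
move=> FS Sk; rewrite -sum1_card -sum_nat_const.
apply: (@leq_trans (\sum_(X in F) #|val X :&: S|)); first exact: leq_sum.
by rewrite -sum_card_starI; apply: leq_sum.
Qed.

Section MaximumIntersecting.
Hypothesis v_ge13 : 13 <= v.
Variable I : {set block}.
Hypotheses (I_indep : independent (zero_BIG B) I)
           (I_max : forall J, independent (zero_BIG B) J -> #|J| <= #|I|).

Lemma card_star_ge6 u : 6 <= #|star u|.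
Proof. have := double_card_star u; lia. Qed.

Lemma card_star_le_max u : #|star u| <= #|I|.
Proof. exact/I_max/star_independent. Qed.

Lemma card_max_ge6 : 6 <= #|I|.
Proof.
have u0 : 'I_v := Ordinal (leq_trans (isT : 0 < 13) v_ge13).
exact: leq_trans (card_star_ge6 u0) (card_star_le_max u0).
Qed.

Definition meeting (y : block) : {set block} := [set x in I | meets x y].

Lemma dominated_of_card_meeting :
  (forall y y', y \notin I -> y' \notin I -> y != y' -> meets y y' ->
     #|meeting y :|: meeting y'| < #|I|) ->
  outside_nonedges_dominated (zero_BIG B) I.
Proof.
move=> small y y' yI y'I yy' m.
have /subsetPn [x xI] : ~~ (I \subset meeting y :|: meeting y').
  by apply: contraTN (small y y' yI y'I yy' m) => /subset_leq_card; rewrite leqNgt.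
by rewrite !inE xI /= negb_or !negbK; exists x.
Qed.

Lemma nonneighbour_pair_of_point x a :
  x \in I -> a \in val x -> (#|I :&: star a|).+1 < #|star a| ->
  nonneighbour_pair_outside (zero_BIG B) I.
Proof.
move=> xI ax; rewrite -(cardsID I (star a)) [I :&: _]setIC -addn2 leq_add2l.
case/card_gt1P => y1 [y2 []]; rewrite !inE => /andP [y1I ay1] /andP [y2I ay2] y12.
by exists x, y1, y2; split => //; apply/andP; split; apply/meetsP; exists a.
Qed.

Section StarCase.
Variable p : 'I_v.
Hypothesis I_sub_star : I \subset star p.

Lemma max_intersecting_star : I = star p.
Proof. by apply/eqP; rewrite eqEcard I_sub_star card_star_le_max. Qed.

Lemma star_nonneighbour_pair : nonneighbour_pair_outside (zero_BIG B) I.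
Proof.
have /card_gt0P [x xI] : 0 < #|I| by apply: leq_trans _ card_max_ge6.
have /card_gt0P [a] : 0 < #|val x :\ p|.
  by rewrite -(ltn_add2l (p \in val x)) -cardsD1 card_block addn0; case: (_ \in _).
rewrite !inE => /andP [ap ax]; apply: (nonneighbour_pair_of_point xI ax).
by rewrite max_intersecting_star setIC card_starI // (leq_trans _ (card_star_ge6 a)).
Qed.

Lemma star_card_meeting y : y \notin I -> #|meeting y| <= 3.
Proof.
rewrite max_intersecting_star inE => py.
rewrite -(card_block y) -[X in _ <= X]muln1; apply: card_le_mul_star.
  move=> x; rewrite inE => /andP [_ /meetsP [w wx wy]].
  by apply/card_gt0P; exists w; rewrite inE wx.
move=> w wy; rewrite -(@card_starI p w); last by apply: contraNneq py => ->.
apply/subset_leq_card/setSI/subsetP => x; rewrite inE => /andP [xI _].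
by rewrite -max_intersecting_star.
Qed.

Lemma star_dominated : outside_nonedges_dominated (zero_BIG B) I.
Proof.
apply: dominated_of_card_meeting => y y' yI y'I _ /meetsP [q qy qy'].
have pq : p != q by apply: contraNneq yI => pq; rewrite max_intersecting_star inE pq.
have [x /andP [px qx]] := block_through pq.
have xI : x \in I by rewrite max_intersecting_star inE.
have overlap : 0 < #|meeting y :&: meeting y'|.
  by apply/card_gt0P; exists x; rewrite !inE xI; apply/andP; split; apply/meetsP; exists q.
rewrite -(ltn_add2r #|meeting y :&: meeting y'|) cardsUI.
apply: leq_trans _ (leq_add card_max_ge6 overlap).
by rewrite addn1 ltnS; exact: leq_add (star_card_meeting yI) (star_card_meeting y'I).
Qed.

End StarCase.

Section NonStarCase.
Hypothesis I_nonstar : forall p, exists2 X, X \in I & p \notin val X.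

Lemma nonstar_card_star_le3 a : #|I :&: star a| <= 3.
Proof.
have [X XI aX] := I_nonstar a.
rewrite -(card_block X) -[X in _ <= X]muln1; apply: card_le_mul_star.
  move=> Y; rewrite inE => /andP [YI _]; have /meetsP [w wY wX] := I_indep YI XI.
  by apply/card_gt0P; exists w; rewrite inE wY.
move=> w wX; rewrite -(@card_starI a w); last by apply: contraNneq aX => ->.
exact/subset_leq_card/setSI/subsetIr.
Qed.

Lemma nonstar_nonneighbour_pair : nonneighbour_pair_outside (zero_BIG B) I.
Proof.
have /card_gt0P [x xI] : 0 < #|I| by apply: leq_trans _ card_max_ge6.
have /card_gt0P [a ax] : 0 < #|val x| by rewrite card_block.
apply: (nonneighbour_pair_of_point xI ax).
by have := nonstar_card_star_le3 a; have := card_star_ge6 a; lia.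
Qed.

Lemma nonstar_sum_card_star_gt6 A :
  A \in I -> 6 < \sum_(u in val A) #|I :&: star u|.
Proof.
move=> AI; rewrite sum_card_starI (big_setD1 A) //= setIid card_block.
apply: (@leq_trans (3 + #|I :\ A|)).
  by have := card_max_ge6; rewrite (cardsD1 A) AI; lia.
rewrite leq_add2l -sum1_card; apply: leq_sum => X; rewrite inE => /andP [_ XI].
have /meetsP [w wX wA] := I_indep XI AI.
by apply/card_gt0P; exists w; rewrite inE wX.
Qed.

Lemma nonstar_triple_point : exists a A B1 B2,
  [/\ [/\ A \in I, B1 \in I & B2 \in I], [/\ a \in val A, a \in val B1 & a \in val B2]
    & [/\ A != B1, A != B2 & B1 != B2]].
Proof.
have /card_gt0P [A AI] : 0 < #|I| by apply: leq_trans _ card_max_ge6.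
have [a aA deg_a] : exists2 a, a \in val A & 2 < #|I :&: star a|.
  have : ~~ [forall u in val A, #|I :&: star u| <= 2].
    apply: contraTN (nonstar_sum_card_star_gt6 AI) => /forall_inP low.
    rewrite -leqNgt -[6]/(3 * 2) -(card_block A) -sum_nat_const.
    exact: leq_sum.
  by rewrite negb_forall_in => /exists_inP [a aA]; rewrite -ltnNge; exists a.
have : 1 < #|(I :&: star a) :\ A|.
  by move: deg_a; rewrite (cardsD1 A) !inE AI aA.
case/card_gt1P => B1 [B2 []]; rewrite !inE.
move=> /andP [AB1 /andP [B1I aB1]] /andP [AB2 /andP [B2I aB2]] B12.
by exists a, A, B1, B2; rewrite ![A == _]eq_sym.
Qed.

Section TriplePoint.
Variables (a : 'I_v) (A B1 B2 : block).
Hypotheses (AI : A \in I) (B1I : B1 \in I) (B2I : B2 \in I).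
Hypotheses (aA : a \in val A) (aB1 : a \in val B1) (aB2 : a \in val B2).
Hypotheses (AB1 : A != B1) (AB2 : A != B2) (B12 : B1 != B2).

Let P := val A :|: val B1 :|: val B2.

Lemma card_triple_point_span : #|P| = 7.
Proof.
have := cardsUI (val A) (val B1).
rewrite (setI_blocks_through AB1 aA aB1) cards1 !card_block addn1 => -[AB1_5].
have := cardsUI (val A :|: val B1) (val B2).
rewrite setIUl (setI_blocks_through AB2 aA aB2) (setI_blocks_through B12 aB1 aB2).
by rewrite setUid cards1 card_block AB1_5 addn1 => -[].
Qed.

Lemma nonstar_triple_point_blocks : I :&: star a = [set A; B1; B2].
Proof.
apply/esym/eqP; rewrite eqEcard cards3 // nonstar_card_star_le3 andbT.
by apply/subsetP => X; rewrite !inE -orbA => /or3P [] /eqP ->; apply/andP.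
Qed.

Lemma nonstar_sub_triple_point_span X : X \in I -> val X \subset P.
Proof.
move=> XI; case aX: (a \in val X).
  have : X \in I :&: star a by rewrite !inE XI.
  rewrite nonstar_triple_point_blocks !inE -orbA => /or3P [] /eqP -> ;
  by apply/subsetP => z zX; rewrite !inE zX ?orbT.
have ne (Y Z : block) w w' : Y != Z -> a \in val Y -> a \in val Z ->
    w \in val X -> w \in val Y -> w' \in val Z -> w != w'.
  move=> YZ aY aZ wX wY w'Z; apply/eqP => ww'.
  have : w \in val Y :&: val Z by rewrite inE wY ww'.
  by rewrite (setI_blocks_through YZ aY aZ) inE => /eqP wa; rewrite -wa wX in aX.
have /meetsP [w1 w1X w1A] := I_indep XI AI.
have /meetsP [w2 w2X w2B1] := I_indep XI B1I.
have /meetsP [w3 w3X w3B2] := I_indep XI B2I.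
have -> : val X = [set w1; w2; w3].
  apply/esym/eqP; rewrite eqEcard card_block cards3 ?leqnn ?andbT.
  - by apply/subsetP => z; rewrite !inE -orbA => /or3P [] /eqP ->.
  - exact: (ne A B1).
  - exact: (ne A B2).
  - exact: (ne B1 B2).
by apply/subsetP => z; rewrite /P !inE -orbA => /or3P [] /eqP ->; rewrite ?w1A ?w2B1 ?w3B2 ?orbT.
Qed.

Lemma nonstar_sum_card_star_span : \sum_(u in P) #|I :&: star u| = 3 * #|I|.
Proof.
rewrite sum_card_starI mulnC -sum_nat_const; apply: eq_bigr => X XI.
by rewrite (setIidPl (nonstar_sub_triple_point_span XI)) card_block.
Qed.

Lemma card_triple_point_spanD1 u : u \in P -> #|P :\ u| = 6.
Proof. by move=> uP; have := cardsD1 u P; rewrite uP card_triple_point_span add1n => -[]. Qed.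

Let W := [set X : block | #|val X :&: P| == 1].

Lemma card_single_span_outside X : X \in W -> #|val X :&: ~: P| = 2.
Proof.
by rewrite inE => /eqP XP; have := cardsID P (val X); rewrite XP card_block setDE add1n => -[].
Qed.

Lemma card_single_span_le : #|W| <= 'C(#|~: P|, 2).
Proof.
rewrite -cards_draws -(@card_in_imset _ _ (fun X : block => val X :&: ~: P)).
  apply/subset_leq_card/subsetP => _ /imsetP [X XW ->].
  by rewrite inE subsetIr card_single_span_outside.
move=> X Y XW YW /= XY.
have /card_gt1P [w1 [w2 [w1X w2X w12]]] : 1 < #|val X :&: ~: P|.
  by rewrite card_single_span_outside.
have w1Y : w1 \in val Y :&: ~: P by rewrite -XY.
have w2Y : w2 \in val Y :&: ~: P by rewrite -XY.
move: w1X w2X w1Y w2Y; rewrite !inE => /andP [w1X _] /andP [w2X _] /andP [w1Y _] /andP [w2Y _].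
exact: (block_eq w12).
Qed.

Lemma nonstar_card_star_le_single_span u :
  u \in P -> #|star u| = 6 -> #|I :&: star u| <= #|W :&: star u|.
Proof.
move=> uP star6.
(* Each of the six other points of P is joined to u by one block: a block of I
   through u contains two of them, a block through u outside W at least one. *)
have Pu6 := card_triple_point_spanD1 uP.
have : \sum_(X in star u) ((X \notin W) + (X \in I)) <= 6.
  apply: (@leq_trans (\sum_(X in star u) #|val X :&: (P :\ u)|)).
    apply: leq_sum => X; rewrite inE => uX.
    have XP : #|val X :&: P| = (#|val X :&: (P :\ u)|).+1.
      by rewrite setIDA (cardsD1 u (val X :&: P)) in_setI uX uP.
    case XI: (X \in I); rewrite inE XP.
      by move: XP; rewrite (setIidPl (nonstar_sub_triple_point_span XI)) card_block => -[<-].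
    by rewrite addn0; case: #|_|.
  rewrite -sum_card_starI -Pu6 -sum1_card; apply: eq_leq; apply: eq_bigr => w.
  by rewrite !inE => /andP [wu _]; rewrite card_starI // eq_sym.
rewrite big_split /= !sum_nat_of_bool.
have -> : [set X in star u | X \notin W] = star u :\: W.
  by apply/setP => X; rewrite !inE andbC.
have -> : [set X in star u | X \in I] = I :&: star u by apply/setP => X; rewrite !inE andbC.
by rewrite -star6 -(cardsID W (star u)) addnC leq_add2r [star u :&: W]setIC.
Qed.

Lemma nonstar_v_ne13 : v != 13.
Proof.
apply/eqP => v13.
have star6 u : #|star u| = 6.
  by apply: double_inj; rewrite double_card_star v13.
have outside6 : #|~: P| = 6.
  by apply/eqP; rewrite -(eqn_add2l 7) -{1}card_triple_point_span cardsC card_ord v13.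
have I_le_W : 3 * #|I| <= #|W|.
  rewrite -nonstar_sum_card_star_span.
  apply: (@leq_trans (\sum_(u in P) #|W :&: star u|)).
    by apply: leq_sum => u uP; apply: nonstar_card_star_le_single_span.
  rewrite sum_card_starI -sum1_card; apply/eq_leq/eq_bigr => X.
  by rewrite inE => /eqP.
(* 18 <= 3 * #|I| <= #|W| <= 'C(6, 2) = 15 *)
have := card_single_span_le; rewrite outside6 => W_le15.
by have := leq_trans (leq_trans (leq_mul (leqnn 3) card_max_ge6) I_le_W) W_le15.
Qed.

Section LargeIntersecting.
Hypothesis I_ge7 : 7 <= #|I|.

Lemma nonstar_card_star_span u : u \in P -> #|I :&: star u| = 3.
Proof.
move=> uP; apply/eqP; rewrite eqn_leq nonstar_card_star_le3 leqNgt /=.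
apply/negP => deg_lt3.
have rest : \sum_(w in P :\ u) #|I :&: star w| <= 18.
  rewrite -[18]/(6 * 3) -(card_triple_point_spanD1 uP) -sum_nat_const.
  by apply: leq_sum => w _; apply: nonstar_card_star_le3.
have := leq_add deg_lt3 rest; rewrite addSn -big_setD1 // nonstar_sum_card_star_span.
by have := leq_mul (leqnn 3) I_ge7; rewrite leqNgt => /negP.
Qed.

Lemma nonstar_span_pair_covered u w : u \in P -> w \in P -> u != w ->
  exists2 X, X \in I & (u \in val X) && (w \in val X).
Proof.
move=> uP wP uw; set F := I :&: star u.
have sum6 : \sum_(w' in P :\ u) #|F :&: star w'| = 6.
  rewrite sum_card_starI -[6]/(3 * 2) -(nonstar_card_star_span uP) -sum_nat_const.
  apply: eq_bigr => X; rewrite !inE => /andP [XI uX].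
  rewrite setIDA (setIidPl (nonstar_sub_triple_point_span XI)).
  by have := cardsD1 u (val X); rewrite uX card_block setDE add1n => -[].
have : 0 < #|F :&: star w|.
  rewrite lt0n; apply/eqP => Fw0; move: sum6.
  have wPu : w \in P :\ u by rewrite in_setD1 eq_sym uw.
  rewrite (big_setD1 w) //= Fw0 add0n; apply/eqP; rewrite neq_ltn; apply/orP; left.
  have := card_triple_point_spanD1 uP; rewrite (cardsD1 w) wPu add1n => -[<-].
  rewrite ltnS -sum1_card; apply: leq_sum => w'.
  rewrite !inE => /andP [w'w /andP [w'u _]].
  by rewrite -(@card_starI u w') 1?eq_sym // subset_leq_card // setSI // subsetIr.
by case/card_gt0P => X; rewrite !inE => /andP [/andP [XI uX] wX]; exists X; rewrite ?uX.
Qed.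

Lemma nonstar_outside_card_span y : y \notin I -> #|val y :&: P| <= 1.
Proof.
move=> yI; apply/card_le1_eqP => z' z; rewrite !in_setI => /andP [z'y z'P] /andP [zy zP].
apply: contraNeq yI => zz'.
have [X XI /andP [zX z'X]] := nonstar_span_pair_covered zP z'P zz'.
by rewrite -(block_eq zz' zX z'X zy z'y).
Qed.

Lemma nonstar_card_meeting y : y \notin I -> #|meeting y| <= 3.
Proof.
move=> yI; apply: (@leq_trans (#|val y :&: P| * 3)).
  apply: card_le_mul_star => [x | w _].
    rewrite inE => /andP [xI /meetsP [w wx wy]]; apply/card_gt0P; exists w.
    have wP := subsetP (nonstar_sub_triple_point_span xI) w wx.
    by apply/setIP; split => //; apply/setIP.
  apply: leq_trans (nonstar_card_star_le3 w); apply/subset_leq_card/setSI.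
  by apply/subsetP => x; rewrite inE => /andP [].
by rewrite -[X in _ <= X]mul1n leq_pmul2r // nonstar_outside_card_span.
Qed.

Lemma nonstar_dominated_large : outside_nonedges_dominated (zero_BIG B) I.
Proof.
apply: dominated_of_card_meeting => y y' yI y'I _ _.
apply: leq_ltn_trans (leq_card_setU _ _) _.
exact: leq_ltn_trans (leq_add (nonstar_card_meeting yI) (nonstar_card_meeting y'I)) I_ge7.
Qed.

End LargeIntersecting.

End TriplePoint.

Lemma nonstar_dominated : outside_nonedges_dominated (zero_BIG B) I.
Proof.
have [a [A [B1 [B2 [[AI B1I B2I] [aA aB1 aB2] [AB1 AB2 B12]]]]]] := nonstar_triple_point.
apply: (nonstar_dominated_large AI B1I B2I aA aB1 aB2 AB1 AB2 B12).
have v_ne13 := nonstar_v_ne13 AI B1I B2I aA aB1 aB2 AB1 AB2 B12.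
apply: leq_trans (card_star_le_max a); apply: double_pred_ge7 (double_card_star a) _.
by rewrite ltn_neqAle eq_sym v_ne13.
Qed.

End NonStarCase.

Lemma max_intersecting_obstruction :
  outside_nonedges_dominated (zero_BIG B) I /\ nonneighbour_pair_outside (zero_BIG B) I.
Proof.
case: (boolP [exists p, I \subset star p]) => [/existsP [p Ip] | /existsPn nonstar].
  by split; [apply: star_dominated Ip | apply: star_nonneighbour_pair Ip].
have I_nonstar p : exists2 X, X \in I & p \notin val X.
  by have /subsetPn [X XI] := nonstar p; rewrite inE; exists X.
by split; [apply: nonstar_dominated | apply: nonstar_nonneighbour_pair].
Qed.

End MaximumIntersecting.

End SteinerTripleSystem.

Lemma admissible_ge13 v : v %% 6 = 1 \/ v %% 6 = 3 -> 9 < v -> 13 <= v.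
Proof. lia. Qed.

Theorem theorem8 (v : nat) (Hadm : v %% 6 = 1 \/ v %% 6 = 3) (Hv : 9 < v)
  (B : {set {set 'I_v}}) (HB : is_STS B) :
  ~ silver (zero_BIG B).
Proof.
move=> [r [reg [I [c [[indep maxI] silver_c]]]]].
have [dominated pair] := max_intersecting_obstruction HB (admissible_ge13 Hadm Hv) indep maxI.
exact: silver_coloring_obstruction reg indep silver_c dominated pair.
Qed.
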